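(* Let $n\ge1$, $K\in\mathcal S_n$, $x\in\partial K$ and $u\in N_K(x)$. Then for $y=x-u$ we have $K\subseteq B(x-u,1)$, i.e. $y\in\partial K^c$. Moreover $-u\in N_{K^c}(y)$.
   Context: $B(x,r)$ is the closed Euclidean ball. For $A\subseteq\mathbb R^n$, $A^c=\bigcap_{x\in A}B(x,1)$ (with $\emptyset^c=\mathbb R^n$). $\mathcal S_n$ is the class of all sets of the form $\bigcap_{x\in A}B(x,1)$, $A\subseteq\mathbb R^n$. For a convex body $T$ and $z\in\partial T$, $N_T(z)$ denotes the set of unit outer normals of $T$ at $z$ (the outer normal cone at $z$ intersected with the unit sphere). *)

From mathcomp Require Import all_boot all_order all_algebra.
From mathcomp Require Import boolp classical_sets reals.
Set Implicit Arguments. Unset Strict Implicit. Unset Printing Implicit Defensive.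
Import Order.TTheory GRing.Theory Num.Theory.
Local Open Scope ring_scope.
Local Open Scope classical_set_scope.

Section Defs.
Variables (R : realType) (n : nat).
Notation V := 'rV[R]_n.

Definition dotv (u v : V) : R := \sum_(i < n) u ord0 i * v ord0 i.

Definition cball (x : V) (r : R) : set V :=
  [set y | dotv (y - x) (y - x) <= r ^+ 2].

(* A^c = intersection of B(a,1) over a in A (empty A gives the whole space) *)
Definition ccomp (A : set V) : set V :=
  [set y | forall a, A a -> cball a 1 y].

Definition in_Sn (K : set V) : Prop := exists A : set V, K = ccomp A.

Definition bdry (S : set V) (x : V) : Prop :=
  forall e : R, 0 < e ->
    (exists y, S y /\ dotv (y - x) (y - x) < e ^+ 2) /\
    (exists z, ~ S z /\ dotv (z - x) (z - x) < e ^+ 2).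

Definition unit_normal (T : set V) (z u : V) : Prop :=
  dotv u u = 1 /\ forall w, T w -> dotv u (w - z) <= 0.

End Defs.

From mathcomp Require Import all_boot all_order all_algebra.
From mathcomp Require Import boolp classical_sets reals.
From mathcomp Require Import ring lra.
Import Order.TTheory GRing.Theory Num.Theory.
Set Implicit Arguments. Unset Strict Implicit.
Local Open Scope ring_scope.
Local Open Scope classical_set_scope.

(* K = A^c is closed, so x lies in K.  If some w in K lay outside
   B(x - u, 1), i.e. |w - x|^2 > 2 <u, x - w>, then the spindle of x and w
   (the intersection of all unit balls containing both, hence a subset of K)
   would bulge past the supporting hyperplane {<u, . - x> = 0}: it contains
   the points x + t (w - x) + b u with t small and b slightly larger than
   t <u, x - w>.  Hence K <= B(x - u, 1).  As |x - (x - u)| = 1, the point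
   x - u is then a boundary point of K^c, and K^c <= B(x, 1) lies on the
   correct side of the hyperplane through x - u with normal -u. *)

Section EuclideanBalls.
Variables (R : realType) (n : nat).
Notation V := 'rV[R]_n.
Implicit Types (u v w x y a : V) (e t b : R).

Lemma dotvDl u v w : dotv (u + v) w = dotv u w + dotv v w.
Proof. by rewrite /dotv -big_split; apply: eq_bigr => i _; rewrite mxE mulrDl. Qed.

Lemma dotvC u v : dotv u v = dotv v u.
Proof. by apply: eq_bigr => i _; rewrite mulrC. Qed.

Lemma dotvDr u v w : dotv w (u + v) = dotv w u + dotv w v.
Proof. by rewrite dotvC dotvDl !(dotvC w). Qed.

Lemma dotvZl e u v : dotv (e *: u) v = e * dotv u v.
Proof. by rewrite /dotv mulr_sumr; apply: eq_bigr => i _; rewrite mxE mulrA. Qed.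

Lemma dotvZr e u v : dotv v (e *: u) = e * dotv v u.
Proof. by rewrite dotvC dotvZl dotvC. Qed.

Lemma dotvNl u v : dotv (- u) v = - dotv u v.
Proof. by rewrite -scaleN1r dotvZl mulN1r. Qed.

Lemma dotvNr u v : dotv v (- u) = - dotv v u.
Proof. by rewrite dotvC dotvNl dotvC. Qed.

Lemma dotvvN u : dotv (- u) (- u) = dotv u u.
Proof. by rewrite dotvNl dotvNr opprK. Qed.

Lemma dotv_ge0 u : 0 <= dotv u u.
Proof. by apply: sumr_ge0 => i _; rewrite -expr2 sqr_ge0. Qed.

Lemma dotv0 : dotv (0 : V) 0 = 0.
Proof. by rewrite /dotv big1 // => i _; rewrite mxE mul0r. Qed.

Ltac dotv_expand := rewrite ?(dotvDl, dotvDr, dotvZl, dotvZr, dotvNl, dotvNr).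

Lemma dotv_AMGM e u v : 2 * e * dotv u v <= e ^+ 2 * dotv u u + dotv v v.
Proof. by have := dotv_ge0 (e *: u - v); dotv_expand; rewrite (dotvC v u); lra. Qed.

Lemma dotv_le1 u v : dotv u u <= 1 -> dotv v v <= 1 -> dotv u v <= 1.
Proof. by move=> hu hv; have := dotv_AMGM 1 u v; lra. Qed.

Lemma dotv_subC x y : dotv (x - y) (x - y) = dotv (y - x) (y - x).
Proof. by rewrite -opprB dotvvN. Qed.

Lemma cballC a y b : cball a b y -> cball y b a.
Proof. by rewrite /cball /= dotv_subC. Qed.

Lemma dotv_add_lt e v w : 0 < e -> dotv v v <= 1 -> dotv w w < e ^+ 2 ->
  dotv (v + w) (v + w) < (1 + e) ^+ 2.
Proof.
move=> e0 hv hw.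
have hvw : dotv v w < e.
  have := dotv_AMGM e v w; have := ler_wpM2l (sqr_ge0 e) hv.
  rewrite -(ltr_pM2l e0) !expr2; nra.
by dotv_expand; rewrite (dotvC w v); nra.
Qed.

Lemma cball1_closed a x :
  (forall e, 0 < e -> exists2 y, cball a 1 y & dotv (y - x) (y - x) < e ^+ 2) ->
  cball a 1 x.
Proof.
move=> approx; rewrite /cball /= expr1n leNgt; apply/negP => far.
pose e := Num.min 1 ((dotv (x - a) (x - a) - 1) / 4).
have e0 : 0 < e by rewrite lt_min ltr01 divr_gt0 // subr_gt0.
have e1 : e <= 1 by rewrite ge_min lexx.
have e4 : 4 * e <= dotv (x - a) (x - a) - 1.
  by rewrite mulrC -ler_pdivlMr // ge_min lexx orbT.
have [y ya yx] := approx e e0.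
rewrite /cball /= expr1n in ya; rewrite dotv_subC in yx.
have := dotv_add_lt e0 ya yx; rewrite addrC addrA subrK.
by nra.
Qed.

Lemma bdry_ccomp_mem A x : bdry (ccomp A) x -> ccomp A x.
Proof.
move=> xb a Aa; apply: cball1_closed => e e0.
by have [[y [yA yx]] _] := xb e e0; exists y => //; apply: yA.
Qed.

Lemma dotv_convex v w t : dotv (v + t *: w) (v + t *: w) =
  (1 - t) * dotv v v + t * dotv (v + w) (v + w) - t * (1 - t) * dotv w w.
Proof. by dotv_expand; rewrite (dotvC w v); ring. Qed.

Lemma cball1_spindle a x w u t b :
  cball a 1 x -> cball a 1 w -> dotv u u = 1 -> 0 <= t <= 1 -> 0 <= b ->
  2 * b + b ^+ 2 <= t * (1 - t) * dotv (w - x) (w - x) ->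
  cball a 1 (x + t *: (w - x) + b *: u).
Proof.
rewrite /cball /= !expr1n => xa wa uu /andP[t0 t1] b0 hb.
set y := x - a + t *: (w - x).
have -> : x + t *: (w - x) + b *: u - a = y + b *: u by rewrite /y addrAC [x + _ - a]addrAC.
have ya : dotv y y <= 1 - t * (1 - t) * dotv (w - x) (w - x).
  rewrite /y dotv_convex [x - a + _]addrC addrA subrK.
  by nra.
have wx0 : 0 <= t * (1 - t) * dotv (w - x) (w - x).
  by apply: mulr_ge0; [apply: mulr_ge0; lra | apply: dotv_ge0].
have yu : dotv y u <= 1 by apply: dotv_le1; lra.
clearbody y; dotv_expand; rewrite uu (dotvC u y).
by have := ler_wpM2l b0 yu; nra.
Qed.

(* With b = t c for m < c < D / 2, the last condition reads
   t (c^2 + D) <= D - 2 c; take c = (D + 2 m) / 4 and t attaining equality. *)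
Lemma spindle_params D m : 0 <= m -> 2 * m < D ->
  exists t b, [/\ 0 <= t <= 1, 0 <= b, t * m < b & 2 * b + b ^+ 2 <= t * (1 - t) * D].
Proof.
move=> m0 mD; pose c := (D + 2 * m) / 4.
have cD : 0 < c ^+ 2 + D by rewrite ltr_wpDl ?sqr_ge0 //; lra.
pose t := (D - 2 * m) / (2 * (c ^+ 2 + D)).
have t0 : 0 < t by rewrite divr_gt0 ?mulr_gt0 //; lra.
have t1 : t <= 1.
  rewrite ler_pdivrMr ?mulr_gt0 // mul1r.
  by have := sqr_ge0 c; lra.
exists t, (t * c); split.
- by rewrite (ltW t0).
- by rewrite mulr_ge0 ?(ltW t0) // divr_ge0 //; lra.
- by rewrite ltr_pM2l // /c; lra.
- rewrite [leLHS](_ : _ = t * (1 - t) * D) // /t /c.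
  by field; rewrite gt_eqF // ltr_wpDl ?sqr_ge0 //; lra.
Qed.

Lemma ccomp_sub_cball_normal A x u :
  ccomp A x -> unit_normal (ccomp A) x u -> ccomp A `<=` cball (x - u) 1.
Proof.
move=> xA [uu normal] w wA; rewrite /cball /= expr1n.
have -> : w - (x - u) = (w - x) + u by rewrite opprB addrA addrAC.
set d := w - x; rewrite leNgt; apply/negP => far.
have {}far : 2 * - dotv u d < dotv d d.
  by move: far; clearbody d; dotv_expand; rewrite uu (dotvC u); lra.
have m0 : 0 <= - dotv u d by rewrite oppr_ge0; apply: normal.
have [t [b [t01 b0 tmb hb]]] := spindle_params m0 far.
have pA : ccomp A (x + t *: d + b *: u).
  by move=> a Aa; apply: cball1_spindle (xA a Aa) (wA a Aa) uu t01 b0 hb.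
have := normal _ pA; rewrite addrAC [x + _ - x]addrAC subrr add0r.
by rewrite dotvDr !dotvZr uu; rewrite mulrN in tmb; lra.
Qed.

Lemma bdry_ccomp_antipode (K : set V) x y :
  K `<=` cball y 1 -> K x -> dotv (y - x) (y - x) = 1 -> bdry (ccomp K) y.
Proof.
move=> Ky xK yx e e0; split.
  exists y; split; first by move=> k /Ky /cballC.
  by rewrite subrr dotv0 exprn_gt0.
exists (y + (e / 2) *: (y - x)); split.
  move=> /(_ x xK); rewrite /cball /= expr1n.
  have -> : y + (e / 2) *: (y - x) - x = (1 + e / 2) *: (y - x).
    by rewrite addrAC scalerDl scale1r.
  by rewrite dotvZl dotvZr yx; apply/negP; rewrite -ltNge; nra.
by rewrite addrAC subrr add0r dotvZl dotvZr yx; nra.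
Qed.

Lemma unit_normal_ccomp_antipode (K : set V) x y :
  K x -> dotv (y - x) (y - x) = 1 -> unit_normal (ccomp K) y (y - x).
Proof.
move=> xK yx; split=> // w /(_ x xK); rewrite /cball /= expr1n => wx.
have -> : w - y = (w - x) - (y - x) by rewrite opprB addrA subrK.
have wy1 : dotv (y - x) (w - x) <= 1 by apply: dotv_le1; rewrite ?yx.
by rewrite dotvDr dotvNr yx; lra.
Qed.

End EuclideanBalls.

Theorem lemma1p24 (R : realType) (n : nat) (K : set 'rV[R]_n) (x u : 'rV[R]_n) :
  (0 < n)%N -> in_Sn K -> bdry K x -> unit_normal K x u ->
  [/\ K `<=` cball (x - u) 1,
      bdry (ccomp K) (x - u)
    & unit_normal (ccomp K) (x - u) (- u)].
Proof.
move=> _ [A ->] /bdry_ccomp_mem xK normal.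
have Ku := ccomp_sub_cball_normal xK normal.
have ux : x - u - x = - u by rewrite addrAC subrr add0r.
have ux1 : dotv (x - u - x) (x - u - x) = 1 by rewrite ux dotvvN; case: normal.
split=> //; first exact: bdry_ccomp_antipode Ku xK ux1.
by have := unit_normal_ccomp_antipode xK ux1; rewrite ux.
Qed.
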